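(* Let $(s_i)$ be in the dominant chamber. Under the bijection $(s_i)\mapsto(\gamma_1,\ldots,\gamma_{n-1})$ described in the context, the length of $(s_i)$ is $\sum_{i=1}^{n-1} (n-i)\gamma_i$.
   Context: Let $W$ be the affine Weyl group of type $\widetilde{A}_{n-1}$, with vertex set $I$ of its extended Dynkin graph (a cycle on $n$ vertices, indexed by $\mathbb{Z}/n$), acting on configuration space $\mathbb{R}^I$ by the simple reflections $s_i$ (in the basis of fundamental coweights: $s_i$ negates coordinate $i$ and adds $v_i$ to the two adjacent coordinates). For $w\in W$, $l(w)$ denotes the length, i.e. the minimal number of simple reflections whose product is $w$. Let $\tilde{S}_n$ be the set of permutations $i \mapsto s_i$ of the integers such that $s_{i+n} = s_i + n$ and $\sum_{i=1}^n s_i = \sum_{i=1}^n i$. The map $\partial : \tilde{S}_n \to \mathbb{R}^I$, $(\partial s)_i = s_i - s_{i-1}$, is injective with image $W \cdot (1,1,\ldots,1)$; since $W$ acts freely on $(1,\ldots,1)$, this identifies $\tilde{S}_n$ with $W$ (an element $s$ corresponds to the $w\in W$ with $\partial s = w\cdot(1,\ldots,1)$), and the length of $s$ means $l(w)$. Under this identification the dominant chamber consists of those $s$ with $s_1 < s_2 < \cdots < s_n$. Given $(s_i)$ in the dominant chamber, define $(\gamma_1, \ldots, \gamma_{n-1})$ as follows: for $1 \le i \le n-1$, let $U_i$ be the set of integers $t$ with $t < s_{i+1}$ and $t \not\equiv s_{i+1}, s_{i+2}, \ldots, s_n \pmod n$; number its elements $u_0 > u_1 > u_2 > \cdots$; then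 $s_i \in U_i$, and $\gamma_i$ is defined by $s_i = u_{\gamma_i}$. This gives a bijection between the dominant chamber and $\mathbb{Z}_{\geq 0}^{n-1}$. *)

From HB Require Import structures.
From mathcomp Require Import all_boot all_order all_algebra.
Set Implicit Arguments. Unset Strict Implicit. Unset Printing Implicit Defensive.
Import Order.TTheory GRing.Theory Num.Theory.
Local Open Scope ring_scope.

Definition affine_perm (n : nat) (s : int -> int) : Prop :=
  bijective s /\
  (forall i : int, s (i + n%:Z) = s i + n%:Z) /\
  \sum_(1 <= i < n.+1) s (Posz i) = \sum_(1 <= i < n.+1) i%:Z.

Definition dominant (n : nat) (s : int -> int) : Prop :=
  forall i j : nat, (1 <= i)%N -> (i < j)%N -> (j <= n)%N -> s (Posz i) < s (Posz j).

(* Configuration space (integer points of R^I), I = Z/n represented by 'I_n. *)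
Definition config (n : nat) := {ffun 'I_n -> int}.

(* Simple reflection s_i: negates coordinate i and adds v_i to the two
   neighbouring coordinates i-1, i+1 (mod n) (for n = 2 the two neighbours
   coincide, which gives 2 v_i, the Cartan matrix of type \tilde A_1). *)
Definition sref (n : nat) (i : 'I_n) (v : config n) : config n :=
  [ffun j : 'I_n => if j == i then - v i
                    else v j + (((j.+1 %% n == i) : nat) + ((i.+1 %% n == j) : nat))%N%:Z * v i].

Definition word_act (n : nat) (w : seq 'I_n) (v : config n) : config n :=
  foldr (@sref n) v w.

Definition ones (n : nat) : config n := [ffun _ => 1].

Definition dpart (n : nat) (s : int -> int) : config n :=
  [ffun j : 'I_n => s (Posz (nat_of_ord j)) - s (Posz (nat_of_ord j) - 1)].

(* The length of s is l(w) where w \in W is the unique element with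
   w . (1,...,1) = \partial s; since W acts freely on (1,...,1), the words
   representing w are exactly the words u with u . (1,...,1) = \partial s.
   [is_length n s k] : k is the minimal length of such a word. *)
Definition is_length (n : nat) (s : int -> int) (k : nat) : Prop :=
  (exists w : seq 'I_n, size w = k /\ word_act w (ones n) = dpart n s) /\
  (forall w : seq 'I_n, word_act w (ones n) = dpart n s -> (k <= size w)%N).

(* gamma_i : index of s_i in U_i = {t < s_{i+1} | t not= s_{i+1},...,s_n mod n}
   numbered decreasingly u_0 > u_1 > ...; i.e. the number of elements of U_i
   strictly greater than s_i, i.e. of integers t with s_i < t < s_{i+1} and
   t not congruent to s_{i+1}, ..., s_n mod n. *)
Definition in_U (n : nat) (s : int -> int) (i : nat) (t : int) : bool :=
  (t < s (Posz i.+1))%R &&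
  all (fun j : nat => ~~ (n%:Z %| t - s (Posz j))%Z) (iota i.+1 (n - i)).

Definition gamma (n : nat) (s : int -> int) (i : nat) : nat :=
  count (fun k : nat => in_U n s i (s (Posz i) + 1 + k%:Z))
        (iota 0 (absz (s (Posz i.+1) - s (Posz i) - 1)%R)).

(* The length of an affine permutation is its number of affine inversions
   Phi x = #{(a, b + k n) : 0 <= a, b < n, a < b + k n, x b + k n < x a},
   read off from its window x 0, ..., x (n-1). The simple reflection s_i swaps
   the window entries at positions i-1 and i (at positions -1 and 0 for i = 0),
   so it changes Phi by -1 or +1 according to the sign of (\partial x)_i. If no
   s_i lowers Phi, every (\partial x)_i is positive; since these sum to n,
   \partial x = (1, ..., 1) and Phi x = 0. Hence Phi x is the least number of
   reflections carrying (1, ..., 1) to \partial x.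
   For dominant s, Phi s = \sum_(1 <= a < b <= n) floor((s_b - s_a) / n).
   Telescoping along s_a < s_{a+1} < ... < s_b, the step from s_i to s_{i+1}
   contributes the number of integers in (s_i, s_{i+1}) congruent to some s_a
   with a <= i, which is gamma_i because s_1, ..., s_n represent each residue
   exactly once; this step occurs for the n - i values b > i. *)

From mathcomp Require Import all_boot all_order all_algebra.
From mathcomp Require Import zify ring.
Set Implicit Arguments. Unset Strict Implicit. Unset Printing Implicit Defensive.
Import Order.TTheory GRing.Theory Num.Theory.
Local Open Scope ring_scope.

Ltac case_ifs := repeat (match goal with
  | |- context [if ?b then _ else _] =>
      lazymatch b with context [if _ then _ else _] => fail | _ => idtac end;
      case: (boolP b) => /= ?; try (exfalso; lia)
  | |- context [nat_of_bool ?b] => case: (boolP b) => /= ?; try (exfalso; lia)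
  end).

(* Rewrites [x p] into [x q] whenever [p = q] holds by [lia], so that [lia]
   sees a single atom for both. *)
Ltac merge_args x := repeat match goal with
  | |- context [x ?p] => match goal with |- context [x ?q] =>
      assert_fails (assert (p = q) by reflexivity);
      let e := fresh in (have e : x p = x q by congr x; lia); rewrite e; clear e
  end end.

Lemma srefK (n : nat) (i : 'I_n) : involutive (sref i).
Proof.
move=> v; apply/ffunP => j; rewrite !ffunE eqxx.
by case: eqP => [->|_]; [rewrite opprK | ring].
Qed.

Lemma modSn_ord (n j : nat) : (j < n)%N -> (j.+1 %% n = if j == n.-1 then 0 else j.+1)%N.
Proof. by move=> jn; case: eqP => [->|h]; [rewrite prednK ?modnn //; lia | rewrite modn_small //; lia]. Qed.

Lemma divz_unique (z q d : int) : 0 < d -> q * d <= z < q * d + d -> (z %/ d)%Z = q.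
Proof.
move=> d_gt0 /andP [zl zu].
have : q <= (z %/ d)%Z by rewrite lez_divRL.
have : ((z %/ d)%Z < q + 1) by rewrite ltz_divLR // mulrDl mul1r.
lia.
Qed.

Lemma divzN_ndvd (z d : int) : 0 < d -> ~~ (d %| z)%Z -> ((- z) %/ d)%Z = - (z %/ d)%Z - 1.
Proof.
move=> d_gt0 ndvd; apply: divz_unique => //.
have nz : d != 0 by lia.
have zl := lez_floor z nz; have zu := ltz_ceil z d_gt0.
have : (z %/ d)%Z * d != z by apply: contraNneq ndvd => <-; apply/dvdzP; exists (z %/ d)%Z.
rewrite mulrDl mul1r in zu; lia.
Qed.

Lemma sum_sum_supp2 (m : nat) (F : 'I_m -> 'I_m -> int) (p q : 'I_m) : p != q ->
  (forall a b, ~~ ((a == p) && (b == q)) -> ~~ ((a == q) && (b == p)) -> F a b = 0) ->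
  \sum_a \sum_b F a b = F p q + F q p.
Proof.
move=> pq H.
rewrite (bigD1 p) //= (bigD1 q) //= big1 ?addr0; last first.
  by move=> b nbq; apply: H; rewrite ?eqxx ?(negbTE pq).
rewrite (bigD1 q) /=; last by rewrite eq_sym.
rewrite (bigD1 p) //= big1 ?addr0; last first.
  by move=> b nbp; apply: H; rewrite ?eqxx // eq_sym (negbTE pq).
rewrite big1 ?addr0 // => a /andP [ap aq]; apply: big1 => b _.
by apply: H; rewrite ?(negbTE ap) ?(negbTE aq).
Qed.

Section Windows.

Variable n : nat.
Hypothesis n_ge2 : (2 <= n)%N.

(* The configuration \partial x of the affine permutation with window
   x 0, ..., x n.-1, using x (-1) = x n.-1 - n. *)
Definition window_config (x : nat -> int) : config n :=
  [ffun j : 'I_n => x j - (if j == 0%N :> nat then x n.-1 - n%:Z else x j.-1)].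

(* s_i swaps the window entries at positions i-1 and i; for i = 0 these are
   the positions -1 and 0, whence the shifts by n. *)
Definition refl_pos (i a : nat) : nat :=
  if i == 0%N then (if a == 0%N then n.-1 else if a == n.-1 then 0%N else a)
  else (if a == i.-1 then i else if a == i then i.-1 else a).

Definition refl_shift (i a : nat) : int :=
  if i == 0%N then (if a == 0%N then n%:Z else if a == n.-1 then - n%:Z else 0) else 0.

Definition window_refl (i : nat) (x : nat -> int) (a : nat) : int :=
  x (refl_pos i a) + refl_shift i (refl_pos i a).

Lemma sref_window_config (i : 'I_n) x :
  sref i (window_config x) = window_config (window_refl i x).
Proof.
apply/ffunP => j; rewrite !ffunE /=.
rewrite (modSn_ord (ltn_ord j)) (modSn_ord (ltn_ord i)) /window_refl /refl_pos /refl_shift.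
have hi := ltn_ord i; have hj := ltn_ord j.
change (j == i) with (nat_of_ord j == nat_of_ord i).
move: (nat_of_ord i) (nat_of_ord j) hi hj => {}i {}j hi hj.
case_ifs.
all: repeat match goal with H : is_true (_ == _) |- _ => move/eqP: H => H end.
all: try subst; simpl in *; try lia.
all: merge_args x; lia.
Qed.

Lemma refl_pos_lt i a : (i < n)%N -> (a < n)%N -> (refl_pos i a < n)%N.
Proof. by move=> *; rewrite /refl_pos; case_ifs; lia. Qed.

Lemma refl_posK i a : (i < n)%N -> (a < n)%N -> refl_pos i (refl_pos i a) = a.
Proof. by move=> *; rewrite /refl_pos; case_ifs; lia. Qed.

(* For window entries u = x a and v = x b, the number of k : int with
   a < b + k n and x b + k n < x a, i.e. of inversions (a, b + k n) of x
   (when a = b or n does not divide u - v). *)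
Definition pair_inversions (a b : nat) (u v : int) : int :=
  Num.max 0 (((u - v) %/ n%:Z)%Z + 1 - ((b <= a)%N : nat)%:Z).

Definition inversions (x : nat -> int) : int :=
  \sum_(a < n) \sum_(b < n) pair_inversions a b (x a) (x b).

Definition distinct_residues (x : nat -> int) : Prop :=
  forall a b : nat, (a < n)%N -> (b < n)%N -> a <> b -> ~~ (n%:Z %| x a - x b)%Z.

Lemma inversions_ge0 x : 0 <= inversions x.
Proof. by apply: sumr_ge0 => a _; apply: sumr_ge0 => b _; rewrite /pair_inversions; lia. Qed.

Lemma eq_inversions x y :
  (forall a b, (a < n)%N -> (b < n)%N -> x a - x b = y a - y b) -> inversions x = inversions y.
Proof. by move=> H; apply: eq_bigr => a _; apply: eq_bigr => b _; rewrite /pair_inversions H. Qed.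

Lemma pair_inversions_shift a b a' b' u v e e' (t : int) :
  e - e' = n%:Z * t -> ((b' <= a')%N : nat)%:Z - ((b <= a)%N : nat)%:Z = t ->
  pair_inversions a' b' (u + e) (v + e') = pair_inversions a b u v.
Proof.
move=> de dt; rewrite /pair_inversions.
have -> : u + e - (v + e') = t * n%:Z + (u - v) by rewrite mulrC -de; ring.
by rewrite divzMDl; [congr Num.max; lia | rewrite eqz_nat; lia].
Qed.

Lemma pair_inversions_sorted a b u v : (u < v) = (a < b)%N -> (v < u) = (b < a)%N ->
  pair_inversions a b u v = if (b < a)%N then ((u - v) %/ n%:Z)%Z else 0.
Proof.
have n_gt0z : 0 < n%:Z by lia.
move=> uv vu; rewrite /pair_inversions; case: (ltngtP a b) uv vu => [ab|ba|ab] uv vu.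
- have : ((u - v) %/ n%:Z)%Z < 0 by rewrite ltz_divLR // mul0r; lia.
  by case_ifs; lia.
- have : 0 <= ((u - v) %/ n%:Z)%Z by rewrite lez_divRL // mul0r; lia.
  by case_ifs; lia.
- have -> : u = v by lia.
  by rewrite subrr div0z; lia.
Qed.

Lemma inversions_window_refl_sum i x : (i < n)%N ->
  inversions (window_refl i x) = \sum_(a < n) \sum_(b < n)
     pair_inversions (refl_pos i a) (refl_pos i b) (x a + refl_shift i a) (x b + refl_shift i b).
Proof.
move=> hi.
pose r (a : 'I_n) : 'I_n := Ordinal (refl_pos_lt hi (ltn_ord a)).
have r_inj : injective r.
  move=> a b /(congr1 val) /= e; apply/val_inj => /=.
  by rewrite -(refl_posK hi (ltn_ord a)) e refl_posK.
rewrite /inversions (reindex_inj r_inj) /=; apply: eq_bigr => a _.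
rewrite (reindex_inj r_inj) /=; apply: eq_bigr => b _.
by rewrite /window_refl !refl_posK.
Qed.

(* Apart from the swapped pair, the shifts only compensate the change of
   relative order of the positions. *)
Lemma refl_shift_diff i a b : (i < n)%N -> (a < n)%N -> (b < n)%N ->
  ~ ((a = (if i == 0%N then 0%N else i.-1) /\ b = (if i == 0%N then n.-1 else i)) \/
     (b = (if i == 0%N then 0%N else i.-1) /\ a = (if i == 0%N then n.-1 else i))) ->
  refl_shift i a - refl_shift i b =
    n%:Z * (((refl_pos i b <= refl_pos i a)%N : nat)%:Z - ((b <= a)%N : nat)%:Z).
Proof.
move=> hi ha hb; case: (i =P 0%N) => [->|/eqP/negbTE i0] /=; rewrite ?i0;
  move=> H; rewrite /refl_shift /refl_pos ?i0 /=; case_ifs; lia.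
Qed.

Lemma window_config_ndvd (i : 'I_n) x : distinct_residues x -> ~~ (n%:Z %| window_config x i)%Z.
Proof.
move=> dx; rewrite ffunE; have hi := ltn_ord i.
case: eqP => [i0|i_neq0].
  have : ~~ (n%:Z %| x i - x n.-1)%Z by apply: dx; lia.
  apply: contra => /dvdzP [k hk]; apply/dvdzP; exists (k - 1); lia.
by apply: dx; lia.
Qed.

Lemma inversions_window_refl_diff i x : (i < n)%N ->
  let p := if i == 0%N then 0%N else i.-1 in let q := if i == 0%N then n.-1 else i in
  let G a b := pair_inversions (refl_pos i a) (refl_pos i b) (x a + refl_shift i a) (x b + refl_shift i b)
               - pair_inversions a b (x a) (x b) in
  inversions (window_refl i x) = inversions x + (G p q + G q p).
Proof.
move=> hi p q G.
have hp : (p < n)%N by rewrite /p; case: (boolP (i == 0%N)) => ? /=; lia.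
have hq : (q < n)%N by rewrite /q; case: (boolP (i == 0%N)) => ? /=; lia.
have pq : Ordinal hp != Ordinal hq.
  by apply/eqP => -[]; rewrite /p /q; case: (boolP (i == 0%N)) => ? /=; lia.
rewrite inversions_window_refl_sum // -(sum_sum_supp2 (F := fun a b : 'I_n => G a b) pq); last first.
  move=> a b h1 h2; rewrite /G.
  have ef := @refl_shift_diff i a b hi (ltn_ord a) (ltn_ord b).
  rewrite (@pair_inversions_shift a b _ _ _ _ _ _ _ (ef _)) ?subrr //.
  move=> [[ea eb]|[eb ea]].
    by move: h1; rewrite -!(inj_eq val_inj) /= ea eb /p /q !eqxx.
  by move: h2; rewrite -!(inj_eq val_inj) /= ea eb /p /q !eqxx.
rewrite /inversions -big_split /=; apply: eq_bigr => a _.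
by rewrite -big_split /=; apply: eq_bigr => b _; rewrite /G; ring.
Qed.

Lemma inversions_window_refl (i : 'I_n) x : distinct_residues x ->
  inversions (window_refl i x) = inversions x + (if window_config x i < 0 then -1 else 1).
Proof.
move=> dx; have hi := ltn_ord i; have n_gt0 : 0 < n%:Z by lia.
rewrite (inversions_window_refl_diff x hi) /= ffunE.
case: (posnP i) => [i0|i_gt0].
  rewrite i0 /= /refl_pos /refl_shift /= eqxx.
  have -> : (n.-1 == 0%N) = false by apply/negbTE; lia.
  have nd : ~~ (n%:Z %| x 0%N - x n.-1)%Z by apply: dx; lia.
  rewrite /pair_inversions.
  have -> : x 0%N + n%:Z - (x n.-1 + - n%:Z) = 2 * n%:Z + (x 0%N - x n.-1) by ring.
  have -> : x n.-1 + - n%:Z - (x 0%N + n%:Z) = (-2) * n%:Z + (- (x 0%N - x n.-1)) by ring.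
  have -> : x n.-1 - x 0%N = - (x 0%N - x n.-1) by ring.
  rewrite !divzMDl ?divzN_ndvd //; try lia.
  have := lez_divRL (-1) (x 0%N - x n.-1) n_gt0.
  set d := ((x 0%N - x n.-1) %/ n%:Z)%Z => hd.
  have : x 0%N - x n.-1 != - n%:Z.
    by apply: contraNneq nd => ->; apply/dvdzP; exists (-1); ring.
  case_ifs; lia.
have i0 : (i == 0%N :> nat) = false by apply/negbTE; lia.
rewrite /refl_pos /refl_shift i0 !eqxx.
have -> : (i == i.-1 :> nat) = false by apply/negbTE; lia.
rewrite !addr0 /pair_inversions.
have -> : x i - x i.-1 = - (x i.-1 - x i) by ring.
have nd : ~~ (n%:Z %| x i.-1 - x i)%Z by apply: dx; lia.
rewrite divzN_ndvd //.
have := lez_divRL 0 (x i.-1 - x i) n_gt0.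
set d := ((x i.-1 - x i) %/ n%:Z)%Z => hd.
case_ifs; lia.
Qed.

Lemma refl_shift_dvd i a : (n%:Z %| refl_shift i a)%Z.
Proof. by rewrite /refl_shift; repeat case: ifP => _; rewrite ?rpredN ?dvdzz ?dvdz0. Qed.

Lemma distinct_residues_window_refl (i : 'I_n) x :
  distinct_residues x -> distinct_residues (window_refl i x).
Proof.
move=> dx a b ha hb ab; rewrite /window_refl.
have hsa := refl_pos_lt (ltn_ord i) ha; have hsb := refl_pos_lt (ltn_ord i) hb.
have sab : refl_pos i a <> refl_pos i b.
  by move=> e; apply: ab; rewrite -(refl_posK (ltn_ord i) ha) e refl_posK.
have := dx _ _ hsa hsb sab; apply: contra => h.
set e := refl_shift i; set ra := refl_pos i a; set rb := refl_pos i b.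
have -> : x ra - x rb = (x ra + e ra - (x rb + e rb)) - (e ra - e rb) by ring.
by apply: rpredB => //; apply: rpredB; exact: refl_shift_dvd.
Qed.

Lemma sum_window_config x : \sum_(j < n) window_config x j = n%:Z.
Proof.
have n_gt0 : (0 < n)%N by lia.
have -> : \sum_(j < n) window_config x j =
    \sum_(0 <= j < n) (x j - (if j == 0%N then x n.-1 - n%:Z else x j.-1)).
  by rewrite big_mkord; apply: eq_bigr => j _; rewrite ffunE.
rewrite (big_ltn n_gt0) /= big_add1 /= telescope_sumr; lia.
Qed.

Lemma window_config_ones x : distinct_residues x ->
  (forall i : 'I_n, 0 <= window_config x i) -> window_config x = ones n.
Proof.
move=> dx c_ge0.
have c_ge1 (i : 'I_n) : 1 <= window_config x i.
  have := window_config_ndvd i dx; have := c_ge0 i.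
  by case: (window_config x i =P 0) => [->|]; [rewrite dvdz0 | lia].
have sum0 : \sum_(i < n) (window_config x i - 1) = 0.
  by rewrite sumrB sum_window_config sumr_const card_ord -natz subrr.
have c1 := psumr_eq0P (P := xpredT) (F := fun i => window_config x i - 1)
  (fun i _ => ltac:(have := c_ge1 i; lia)) sum0.
by apply/ffunP => i; apply/eqP; rewrite [ones n i]ffunE -subr_eq0 c1.
Qed.

Lemma window_config_id : window_config (fun a => a%:Z) = ones n.
Proof. by apply/ffunP => j; rewrite !ffunE; case: eqP => ?; lia. Qed.

Lemma inversions_id : inversions (fun a => a%:Z) = 0.
Proof.
apply: big1 => a _; apply: big1 => b _; rewrite /pair_inversions.
have ha := ltn_ord a; have hb := ltn_ord b; have n_gt0 : 0 < n%:Z by lia.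
case: (ltnP a b) => ab.
  by rewrite (@divz_unique _ (-1)) //; lia.
by rewrite (@divz_unique _ 0) //; lia.
Qed.

Lemma distinct_residues_id : distinct_residues (fun a => a%:Z).
Proof.
move=> a b ha hb ab; apply/negP => /dvdzP [k hk].
have k0 : k = 0 by nia.
by rewrite k0 in hk; lia.
Qed.

Lemma eq_inversions_window_config x y :
  window_config x = window_config y -> inversions x = inversions y.
Proof.
move=> exy.
have d (a : nat) : (a < n)%N -> x a - y a = x 0%N - y 0%N.
  elim: a => [|a IH] ha //.
  have := congr1 (fun c : config n => c (Ordinal ha)) exy; rewrite /= !ffunE /=.
  by have := IH (ltnW ha); lia.
by apply: eq_inversions => a b ha hb; have := d a ha; have := d b hb; lia.
Qed.

Lemma descent_or_ones x : distinct_residues x ->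
  (exists i : 'I_n, window_config x i < 0) \/ (window_config x = ones n /\ inversions x = 0).
Proof.
move=> dx; case: (pickP (fun i : 'I_n => window_config x i < 0)) => [i ci|no_descent].
  by left; exists i.
have c1 : window_config x = ones n.
  by apply: window_config_ones => // i; have := no_descent i; rewrite /= => /negbT; lia.
by right; split; rewrite // -inversions_id; apply: eq_inversions_window_config; rewrite c1 window_config_id.
Qed.

Lemma word_of_inversions x : distinct_residues x ->
  exists w : seq 'I_n, (size w)%:Z = inversions x /\ word_act w (ones n) = window_config x.
Proof.
have [m em] : exists m : nat, inversions x = m%:Z.
  by exists (absz (inversions x)); rewrite gez0_abs // inversions_ge0.
elim: m x em => [|m IH] x em dx; case: (descent_or_ones dx) => [[i ci]|[c1 inv0]].
- have := inversions_window_refl i dx; rewrite ci em.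
  by have := inversions_ge0 (window_refl i x); lia.
- by exists [::]; rewrite em c1.
- have := inversions_window_refl i dx; rewrite ci em => e.
  have [w [sw ew]] := IH (window_refl i x) (ltac:(lia)) (distinct_residues_window_refl i dx).
  exists (i :: w); split; first by rewrite /=; lia.
  by rewrite /= ew -sref_window_config srefK.
- by move: em; rewrite inv0.
Qed.

Lemma inversions_le_word (w : seq 'I_n) : exists x,
  [/\ distinct_residues x, window_config x = word_act w (ones n) & inversions x <= (size w)%:Z].
Proof.
elim: w => [|i w [x [dx ex le]]].
  exists (fun a => a%:Z); split; rewrite ?window_config_id ?inversions_id //.
  exact: distinct_residues_id.
exists (window_refl i x); split.
- exact: distinct_residues_window_refl.
- by rewrite /= -ex sref_window_config.
- by rewrite inversions_window_refl //=; case: ifP; lia.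
Qed.

End Windows.

Lemma Posz_sum (I : Type) (r : seq I) (P : pred I) (F : I -> nat) :
  (\sum_(i <- r | P i) F i)%N%:Z = \sum_(i <- r | P i) (F i)%:Z.
Proof. exact: (big_morph Posz PoszD erefl). Qed.

Lemma floorS_sub (z d : int) : 0 < d -> ((z + 1) %/ d)%Z - (z %/ d)%Z = ((d %| z + 1)%Z : nat)%:Z.
Proof.
move=> d_gt0; have nz : d != 0 by lia.
have zl := lez_floor z nz; have zu := ltz_ceil z d_gt0; set q := (z %/ d)%Z in zl zu *.
rewrite mulrDl mul1r in zu.
case: (z + 1 =P q * d + d) => e.
  have -> : ((z + 1) %/ d)%Z = q + 1 by apply: divz_unique; rewrite // mulrDl mul1r; lia.
  have -> : (d %| z + 1)%Z by apply/dvdzP; exists (q + 1); rewrite mulrDl mul1r.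
  lia.
have -> : ((z + 1) %/ d)%Z = q by apply: divz_unique; lia.
have -> : (d %| z + 1)%Z = false; last by rewrite subrr.
apply/negP => /dvdzP [k hk].
have : q < k by rewrite -(ltr_pM2r d_gt0); lia.
have : k < q + 1 by rewrite -(ltr_pM2r d_gt0); lia.
lia.
Qed.

Lemma floor_sub_count (u c d : int) (m : nat) : 0 < d ->
  ((u + m%:Z - c) %/ d)%Z - ((u - c) %/ d)%Z =
    (count (fun k : nat => (d %| u + 1 + k%:Z - c)%Z) (iota 0 m))%:Z.
Proof.
move=> d_gt0; elim: m => [|m IH]; first by rewrite addr0 subrr.
have -> : iota 0 m.+1 = iota 0 m ++ [:: m] by rewrite -addn1 iotaD.
rewrite count_cat /= addn0 PoszD -IH.
have -> : u + m.+1%:Z - c = (u + m%:Z - c) + 1 by lia.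
have -> : u + 1 + m%:Z - c = (u + m%:Z - c) + 1 by lia.
by have := floorS_sub (u + m%:Z - c) d_gt0; lia.
Qed.

Lemma sum_triangle_exchange (F : nat -> nat -> int) m :
  \sum_(1 <= a < m.+1) \sum_(a <= i < m.+1) F i a = \sum_(1 <= i < m.+1) \sum_(1 <= a < i.+1) F i a.
Proof.
elim: m => [|m IH]; first by rewrite !big_geq.
rewrite [RHS](big_nat_recr m.+1 1) //= -IH (big_nat_recr m.+1 1) //= big_nat1.
rewrite [X in _ = _ + X](big_nat_recr m.+1 1) //= addrA; congr (_ + _).
rewrite -big_split /=; apply: eq_big_nat => a /andP [a1 am].
by rewrite (big_nat_recr m.+1 a) //; lia.
Qed.

Lemma sum_prefix_sums (G : nat -> int) m :
  \sum_(1 <= b < m.+1) \sum_(1 <= i < b) G i = \sum_(1 <= i < m) (m - i)%N%:Z * G i.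
Proof.
elim: m => [|m IH]; first by rewrite !big_geq.
rewrite (big_nat_recr m.+1 1) //= IH.
have -> : \sum_(1 <= i < m.+1) (m.+1 - i)%N%:Z * G i =
    \sum_(1 <= i < m.+1) ((m - i)%N%:Z * G i + G i).
  by apply: eq_big_nat => i /andP [i1 im]; rewrite subSn; [rewrite -addn1 PoszD; ring | lia].
rewrite big_split /=; congr (_ + _).
case: m {IH} => [|m]; first by rewrite !big_geq.
by rewrite (big_nat_recr m.+1 1) //= subnn mul0r addr0.
Qed.

Lemma sum_ord_rot (m : nat) (F : nat -> int) : (0 < m)%N ->
  \sum_(a < m) F (if a == 0%N :> nat then m else a) = \sum_(1 <= a < m.+1) F a.
Proof.
case: m => // m _; rewrite big_ord_recl /= (big_nat_recr m.+1) //=.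
by rewrite addrC big_add1 /= big_mkord.
Qed.

Section AffinePermutation.

Variable n : nat.
Hypothesis n_gt0 : (0 < n)%N.
Variable s : int -> int.
Hypothesis s_periodic : forall t, s (t + n%:Z) = s t + n%:Z.
Hypothesis s_bij : bijective s.

Lemma periodic_addMz (k t : int) : s (t + k * n%:Z) = s t + k * n%:Z.
Proof.
have per_nat (m : nat) u : s (u + m%:Z * n%:Z) = s u + m%:Z * n%:Z.
  elim: m u => [|m IH] u; first by rewrite mul0r !addr0.
  have -> : u + m.+1%:Z * n%:Z = (u + m%:Z * n%:Z) + n%:Z by lia.
  by rewrite s_periodic IH; lia.
case: k => m; first exact: per_nat.
have := per_nat m.+1 (t + Negz m * n%:Z).
by rewrite NegzE (_ : t + - m.+1%:Z * n%:Z + m.+1%:Z * n%:Z = t) => [->|]; ring.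
Qed.

Lemma periodic_congr_inj (a b : int) : `|a - b| < n%:Z -> (n%:Z %| s a - s b)%Z -> a = b.
Proof.
move=> hab /dvdzP [q hq].
have : s a = s (b + q * n%:Z) by rewrite periodic_addMz; lia.
move/(bij_inj s_bij) => e; rewrite e in hab *.
have : q = 0.
  move: hab; rewrite addrAC subrr add0r.
  by case: (ger0P (q * n%:Z)) => h1 h2; nia.
by move=> ->; ring.
Qed.

Lemma count_residues (t : int) : count (fun a : nat => (n%:Z %| t - s a)%Z) (iota 1 n) = 1%N.
Proof.
have [h hK Kh] := s_bij; have nz : n%:Z != 0 by lia.
set r := (((h t - 1) %% n%:Z)%Z).
have r_ge0 : 0 <= r by exact: modz_ge0.
have r_lt : r < n%:Z by exact: ltz_mod.
have ht : t = s (r + 1 + ((h t - 1) %/ n%:Z)%Z * n%:Z).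
  by rewrite -{1}(Kh t); congr s; have := divz_eq (h t - 1) n%:Z; lia.
have dvd_r : (n%:Z %| t - s (r + 1))%Z.
  by rewrite ht periodic_addMz; apply/dvdzP; exists ((h t - 1) %/ n%:Z)%Z; ring.
rewrite (@eq_in_count _ _ (pred1 (absz r).+1)); last first.
  move=> a; rewrite mem_iota => ha /=; apply/idP/eqP => [dvd_a|->].
    suff : a%:Z = r + 1 by lia.
    apply: periodic_congr_inj; first lia.
    have -> : s a - s (r + 1) = (t - s (r + 1)) - (t - s a) by ring.
    exact: rpredB.
  by have -> : (absz r).+1%:Z = r + 1 by lia.
by rewrite count_uniq_mem ?iota_uniq // mem_iota; lia.
Qed.

Lemma window_config_dpart : window_config n (fun a => s a) = dpart n s.
Proof.
apply/ffunP => j; rewrite !ffunE; case: eqP => [j0|j_neq0].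
  have : s (Posz n.-1) = s (Posz j - 1) + n%:Z by rewrite -s_periodic; congr s; lia.
  lia.
by have -> : Posz j.-1 = Posz j - 1 by lia.
Qed.

Lemma distinct_residues_window : distinct_residues n (fun a => s a).
Proof.
move=> a b ha hb ab; apply/negP => dvd.
by have := periodic_congr_inj (a := Posz a) (b := Posz b) (ltac:(lia)) dvd; lia.
Qed.

Lemma count_in_U i t : (1 <= i < n)%N -> t < s i.+1 ->
  count (fun a : nat => (n%:Z %| t - s a)%Z) (iota 1 i) = in_U n s i t.
Proof.
move=> /andP [i_ge1 i_lt] t_lt; have := count_residues t.
rewrite /in_U t_lt /= -(subnKC (ltnW i_lt)) iotaD count_cat add1n subnKC ?(ltnW i_lt) //.
have -> : all (fun j : nat => ~~ (n%:Z %| t - s j)%Z) (iota i.+1 (n - i)) =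
    ~~ has (fun j : nat => (n%:Z %| t - s j)%Z) (iota i.+1 (n - i)) by rewrite -all_predC.
by rewrite has_count; case: (count _ (iota i.+1 _)) => [|[|m]] /=; lia.
Qed.

End AffinePermutation.

Section Length.

Variable n : nat.
Hypothesis n_ge2 : (2 <= n)%N.
Let n_gt0 : (0 < n)%N := ltnW n_ge2.
Variable s : int -> int.
Hypothesis s_periodic : forall t, s (t + n%:Z) = s t + n%:Z.
Hypothesis s_bij : bijective s.

Lemma is_length_inversions (k : nat) :
  inversions n (fun a => s a) = k%:Z -> is_length n s k.
Proof.
move=> inv_k; rewrite /is_length -(window_config_dpart n_gt0 s_periodic); split.
  have [w [size_w ew]] := word_of_inversions n_ge2 (distinct_residues_window n_gt0 s_periodic s_bij).
  by exists w; split => //; apply/eqP; rewrite -eqz_nat size_w inv_k.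
move=> w ew; have [x [_ ex le_w]] := inversions_le_word n_ge2 w.
by rewrite ew in ex; move: le_w; rewrite (eq_inversions_window_config n_ge2 ex) inv_k; lia.
Qed.

Lemma inversions_window_periodic : inversions n (fun a => s a) =
  \sum_(1 <= a < n.+1) \sum_(1 <= b < n.+1) pair_inversions n a b (s a) (s b).
Proof.
rewrite /inversions -sum_ord_rot //; apply: eq_bigr => a _.
rewrite -sum_ord_rot //; apply: eq_bigr => b _.
have sr (c : 'I_n) : s (if c == 0%N :> nat then n else c) = s c + n%:Z * ((c == 0%N :> nat) : nat)%:Z.
  case: eqP => [c0|_]; last by rewrite mulr0 addr0.
  by rewrite c0 mulr1 -s_periodic add0r.
rewrite !sr; symmetry.
apply: (@pair_inversions_shift n n_ge2 a b _ _ _ _ _ _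
  (((a == 0%N :> nat) : nat)%:Z - ((b == 0%N :> nat) : nat)%:Z)).
  by ring.
by have := ltn_ord a; have := ltn_ord b; case_ifs; lia.
Qed.


Hypothesis s_dominant : dominant n s.

Lemma dominant_ltE (i j : nat) : (1 <= i <= n)%N -> (1 <= j <= n)%N -> (s i < s j) = (i < j)%N.
Proof.
move=> hi hj; case: ltngtP => [ij|ji|->]; last by rewrite ltxx.
  by apply: s_dominant; lia.
by apply/negbTE; rewrite -leNgt ltW //; apply: s_dominant; lia.
Qed.

Lemma inversions_dominant_floor : inversions n (fun a => s a) =
  \sum_(1 <= b < n.+1) \sum_(1 <= a < b) ((s b - s a) %/ n%:Z)%Z.
Proof.
rewrite inversions_window_periodic; apply: eq_big_nat => b hb.
rewrite (big_nat_widen _ _ _ _ _ (ltnW (proj2 (andP hb)))) [RHS]big_mkcond /=.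
by apply: eq_big_nat => a ha; apply: (pair_inversions_sorted n_ge2); rewrite dominant_ltE //; lia.
Qed.

(* Each floor difference counts the integers of (s_i, s_{i+1}) congruent to
   s_a; summing over a <= i counts those congruent to one of s_1, ..., s_i. *)
Lemma floor_sub_gamma i : (1 <= i < n)%N ->
  \sum_(1 <= a < i.+1) (((s i.+1 - s a) %/ n%:Z)%Z - ((s i - s a) %/ n%:Z)%Z) = (gamma n s i)%:Z.
Proof.
move=> /andP [i_ge1 i_lt].
have n_gt0z : 0 < n%:Z by lia.
have s_lt : s i < s i.+1 by rewrite dominant_ltE //; lia.
set L := absz (s i.+1 - s i - 1)%R.
have hL : L%:Z = s i.+1 - s i - 1 by rewrite /L gez0_abs //; lia.
pose P (a k : nat) := (n%:Z %| s i + 1 + k%:Z - s a)%Z.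
have floor_count a : (1 <= a < i.+1)%N ->
    ((s i.+1 - s a) %/ n%:Z)%Z - ((s i - s a) %/ n%:Z)%Z = (count (P a) (iota 0 L))%:Z.
  move=> /andP [a_ge1 a_le].
  have -> : s i.+1 - s a = s i + L.+1%:Z - s a by lia.
  rewrite floor_sub_count //.
  have -> : iota 0 L.+1 = iota 0 L ++ [:: L] by rewrite -addn1 iotaD.
  rewrite count_cat /=.
  have -> : (n%:Z %| s i + 1 + L%:Z - s a)%Z = false; last by rewrite /= !addn0.
  apply/negP => dvd; suff : Posz i.+1 = Posz a by lia.
  apply: (periodic_congr_inj n_gt0 s_periodic s_bij); first lia.
  by rewrite (_ : s i.+1 - s a = s i + 1 + L%:Z - s a) //; lia.
have count_sum (p : pred nat) (l : seq nat) : count p l = (\sum_(k <- l) p k)%N.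
  by rewrite -sum1_count big_mkcond.
rewrite (eq_big_nat _ _ floor_count) -Posz_sum /gamma -/L; congr Posz.
under eq_bigr do rewrite count_sum.
rewrite exchange_big count_sum big_seq [RHS]big_seq; apply: eq_bigr => k.
rewrite mem_iota => /andP [_ k_lt] /=; rewrite -count_sum.
by rewrite /index_iota subSS subn0 (count_in_U n_gt0 s_periodic s_bij) //; lia.
Qed.

Lemma inversions_dominant :
  inversions n (fun a => s a) = (\sum_(1 <= i < n) (n - i) * gamma n s i)%N%:Z.
Proof.
rewrite inversions_dominant_floor.
pose d i a := ((s i.+1 - s a) %/ n%:Z)%Z - ((s i - s a) %/ n%:Z)%Z.
have telescope b a : (a <= b)%N -> ((s b - s a) %/ n%:Z)%Z = \sum_(a <= i < b) d i a.
  by move=> ab; rewrite telescope_sumr // subrr div0z subr0.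
transitivity (\sum_(1 <= b < n.+1) \sum_(1 <= i < b) (gamma n s i)%:Z).
  apply: eq_big_nat => -[|b] // /andP [_ b_le].
  under eq_big_nat => a /andP [_ ab] do rewrite (telescope _ _ (ltnW ab)).
  rewrite sum_triangle_exchange; apply: eq_big_nat => i /andP [i_ge1 i_le].
  by apply: floor_sub_gamma; lia.
rewrite sum_prefix_sums Posz_sum; apply: eq_big_nat => i _.
by rewrite PoszM.
Qed.

End Length.

Theorem proposition5p3 (n : nat) (hn : (2 <= n)%N) (s : int -> int) :
  affine_perm n s -> dominant n s ->
  is_length n s (\sum_(1 <= i < n) (n - i) * gamma n s i)%N.
Proof.
move=> [s_bij [s_periodic _]] s_dominant.
by apply: is_length_inversions => //; exact: inversions_dominant.
Qed.
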